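(* Let $\beta\in(1,3/2)$ and let $\mu$ be an arbitrary Borel probability measure on $S_\beta$. Then $$(m_1\otimes m_2\otimes\mu)\circ K_\beta^{-1}=(m_1\otimes m_2\otimes\mu)\circ R_\beta^{-1}=m_1\otimes m_2\otimes\nu,$$ where $\nu=ps\,\mu\circ\tau_1^{-1}+pt\,\mu\circ\tau_2^{-1}+p(1-s-t)\,\mu\circ\tau_3^{-1}+(1-p)s\,\mu\circ\tau_4^{-1}+(1-p)t\,\mu\circ\tau_5^{-1}+(1-p)(1-s-t)\,\mu\circ\tau_6^{-1}$.
   Context: $\vec q_0=(0,0)$, $\vec q_1=(1,0)$, $\vec q_2=(0,1)$; $S_\beta$ is the attractor of the IFS $f_{\vec q_i}(\vec z)=(\vec z+\vec q_i)/\beta$, here the closed triangle with vertices $(0,0)$, $(\frac1{\beta-1},0)$, $(0,\frac1{\beta-1})$. Subsets of $S_\beta$: $E_0=[0,\frac1\beta)\times[0,\frac1\beta)$; $E_1=\{0\le y<\frac1\beta,\ \frac{1}{\beta(\beta-1)}<x+y\le\frac{1}{\beta-1}\}$; $E_2=\{0\le x<\frac1\beta,\ \frac{1}{\beta(\beta-1)}<x+y\le\frac{1}{\beta-1}\}$; $C_{01}=\{x\ge\frac1\beta,\ 0\le y<\frac1\beta,\ x+y\le\frac{1}{\beta(\beta-1)}\}$; $C_{12}=\{x\ge\frac1\beta,\ y\ge\frac1\beta,\ \frac{1}{\beta(\beta-1)}<x+y\le\frac{1}{\beta-1}\}$; $C_{02}=\{0\le x<\frac1\beta,\ y\ge\frac1\beta,\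 x+y\le\frac{1}{\beta(\beta-1)}\}$; $C_{012}=\{x\ge\frac1\beta,\ y\ge\frac1\beta,\ x+y\le\frac{1}{\beta(\beta-1)}\}$. Maps $\tau_k(\vec z)=\beta\vec z-a_k(\vec z)$, $k=1,\ldots,6$: $a_k=\vec q_i$ on $E_i$; on $C_{ij}$ ($ij\in\{01,12,02\}$) $a_k=\vec q_i$ for $k\le3$ and $\vec q_j$ for $k\ge4$; on $C_{012}$, $a_k=\vec q_0$ for $k\in\{1,4\}$, $\vec q_1$ for $k\in\{2,5\}$, $\vec q_2$ for $k\in\{3,6\}$. For a measure $\mu$, $\mu\circ\tau_k^{-1}$ denotes $A\mapsto\mu(\tau_k^{-1}(A))$. $\Omega=\{0,1\}^{\mathbb N}$, $\Upsilon=\{0,1,2\}^{\mathbb N}$ with product $\sigma$-algebras and left shifts $\sigma,\sigma'$. Fix $p\in(0,1)$, $s,t>0$, $s+t<1$; $m_1$ is the product measure on $\Omega$ with weights $p$ (symbol $0$) and $1-p$ (symbol $1$); $m_2$ is the product measure on $\Upsilon$ with weights $s,t,1-s-t$ on symbols $0,1,2$. $K_\beta$ on $\Omega\times\Upsilon\times S_\beta$: $K_\beta(\omega,\upsilon,\vec z)=(\omega,\upsilon,\beta\vec z-\vec q_i)$ if $\vec z\in E_i$; $(\sigma\omega,\upsilon,\beta\vec z-\vec q_i)$ if $\omega_1=0$, $\vec z\in C_{ij}$; $(\sigma\omega,\upsilon,\beta\vec z-\vec q_j)$ if $\omega_1=1$, $\vec z\in C_{ij}$; $(\omega,\sigma'\upsilon,\beta\vec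 z-\vec q_i)$ if $\vec z\in C_{012}$, $\upsilon_1=i$. $R_\beta$ on $\Omega\times\Upsilon\times S_\beta$: $R_\beta(\omega,\upsilon,\vec z)=(\sigma\omega,\sigma'\upsilon,\tau_k(\vec z))$ with $k=3\omega_1+\upsilon_1+1$ (i.e. $(\omega_1,\upsilon_1)=(0,0),(0,1),(0,2),(1,0),(1,1),(1,2)$ give $k=1,\ldots,6$). *)

From HB Require Import structures.
From mathcomp Require Import all_boot all_order all_algebra.
From mathcomp Require Import all_classical all_reals all_analysis.
Set Implicit Arguments. Unset Strict Implicit. Unset Printing Implicit Defensive.
Import Order.TTheory GRing.Theory Num.Theory.
Local Open Scope classical_set_scope.
Local Open Scope ring_scope.

Definition coord_sets (A : Type) : set (set (nat -> A)) :=
  [set C | exists n a, C = [set w | w n = a]].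

(* Omega = {0,1}^N (symbol 0 = false, symbol 1 = true), index 0 = first symbol *)
Definition Omega := g_sigma_algebraType (@coord_sets bool).
(* 'I_3 is pointed (needed for the generated sigma-algebra) *)
HB.instance Definition _ := isPointed.Build 'I_3 ord0.
Definition Upsilon := g_sigma_algebraType (@coord_sets 'I_3).

Definition shift (A : Type) (w : nat -> A) : nat -> A := fun n => w n.+1.

Definition is_product_measure (A : Type) (R : realType)
    (wt : A -> R) (m : set (nat -> A) -> \bar R) : Prop :=
  forall (n : nat) (a : 'I_n -> A),
    m [set w | forall i : 'I_n, w i = a i] = (\prod_(i < n) wt (a i))%:E.

Definition wt1 (R : realType) (p : R) (b : bool) : R := if b then 1 - p else p.
Definition wt2 (R : realType) (s t : R) (i : 'I_3) : R :=
  if val i == 0%N then s else if val i == 1%N then t else 1 - s - t.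

Section Pieces.
Variables (R : realType) (b : R).
Implicit Types z : (R * R)%type.

Definition S_beta : set (R * R) :=
  [set z | 0 <= z.1 /\ 0 <= z.2 /\ z.1 + z.2 <= (b - 1)^-1].

Definition c1 : R := (b * (b - 1))^-1.
Definition c2 : R := (b - 1)^-1.

Definition inE0 z := [&& 0 <= z.1, z.1 < b^-1, 0 <= z.2 & z.2 < b^-1].
Definition inE1 z := [&& 0 <= z.2, z.2 < b^-1, c1 < z.1 + z.2 & z.1 + z.2 <= c2].
Definition inE2 z := [&& 0 <= z.1, z.1 < b^-1, c1 < z.1 + z.2 & z.1 + z.2 <= c2].
Definition inC01 z := [&& b^-1 <= z.1, 0 <= z.2, z.2 < b^-1 & z.1 + z.2 <= c1].
Definition inC12 z := [&& b^-1 <= z.1, b^-1 <= z.2, c1 < z.1 + z.2 & z.1 + z.2 <= c2].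
Definition inC02 z := [&& 0 <= z.1, z.1 < b^-1, b^-1 <= z.2 & z.1 + z.2 <= c1].
Definition inC012 z := [&& b^-1 <= z.1, b^-1 <= z.2 & z.1 + z.2 <= c1].

Definition q (i : nat) : R * R :=
  if i == 0%N then (0, 0) else if i == 1%N then (1, 0) else (0, 1).

Definition bmap z (v : R * R) : R * R := (b * z.1 - v.1, b * z.2 - v.2).

(* a_k(z), k = 1..6; outside S_beta (irrelevant) we put q_0 *)
Definition a_k (k : nat) z : R * R :=
  if inE0 z then q 0 else if inE1 z then q 1 else if inE2 z then q 2
  else if inC01 z then (if (k <= 3)%N then q 0 else q 1)
  else if inC12 z then (if (k <= 3)%N then q 1 else q 2)
  else if inC02 z then (if (k <= 3)%N then q 0 else q 2)
  else if inC012 z then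
    (if (k %% 3 == 1)%N then q 0 else if (k %% 3 == 2)%N then q 1 else q 2)
  else q 0.

Definition tau (k : nat) z : R * R := bmap z (a_k k z).

Definition bit (x : bool) : nat := if x then 1%N else 0%N.

(* K_beta; outside S_beta (a null set for the measures considered) identity *)
Definition Kmap (x : (Omega * Upsilon * (R * R))%type) : (Omega * Upsilon * (R * R))%type :=
  let: (om, up, z) := x in
  if inE0 z then (om, up, bmap z (q 0))
  else if inE1 z then (om, up, bmap z (q 1))
  else if inE2 z then (om, up, bmap z (q 2))
  else if inC01 z then (shift om, up, bmap z (if om 0%N then q 1 else q 0))
  else if inC12 z then (shift om, up, bmap z (if om 0%N then q 2 else q 1))
  else if inC02 z then (shift om, up, bmap z (if om 0%N then q 2 else q 0))
  else if inC012 z then (om, shift up, bmap z (q (val (up 0%N))))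
  else (om, up, z).

Definition Rmap (x : (Omega * Upsilon * (R * R))%type) : (Omega * Upsilon * (R * R))%type :=
  let: (om, up, z) := x in
  (shift om, shift up, tau (3 * bit (om 0%N) + val (up 0%N) + 1) z).

End Pieces.

From Pilot Require Import Defs.
From HB Require Import structures.
From mathcomp Require Import all_boot all_order all_algebra.
From mathcomp Require Import all_classical all_reals all_analysis.
From mathcomp Require Import ring measurable_realfun.
Import Order.TTheory GRing.Theory Num.Theory.
Local Open Scope classical_set_scope.
Local Open Scope ring_scope.

(* Both K_beta and R_beta act cellwise.  The plane is cut into the pieces E_0,
   E_1, E_2, C_01, C_12, C_02, C_012 and the mu-null complement of S_beta; on a
   cell, given the first symbols omega_1 and upsilon_1, each map is the product
   of a shift or the identity on each sequence space with an affine map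
   z |-> beta z - q_i.  So the mass of the preimage of a rectangle
   (cylinder x cylinder x B) is a finite sum of products of three masses.  As
   m1 and m2 are Bernoulli measures, reading a first symbol and shifting
   multiplies the mass of a cylinder by the weight of that symbol, and on every
   cell the way K_beta chooses its digit (deterministically on E_i, from
   omega_1 on C_ij, from upsilon_1 on C_012) reproduces the weights
   p s, ..., (1-p)(1-s-t) with which R_beta uses tau_1, ..., tau_6.  Hence both
   pushforwards agree with m1 x m2 x nu on rectangles, a pi-system generating
   the product sigma-algebra, and the uniqueness of measures concludes. *)

Lemma measurable_preimage {d d'} {T : measurableType d} {U : measurableType d'}
    {f : T -> U} {D : set U} :
  measurable_fun setT f -> measurable D -> measurable (f @^-1` D).
Proof. by move=> mf mD; rewrite -[X in measurable X]setTI; exact: mf. Qed.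

Section finite_partitions.
Context {d} {T : measurableType d}.

Lemma measure_fibers {R : realType} (P : {measure set T -> \bar R})
    {I : finType} (g : T -> I) (Y : set T) :
  (forall i, measurable (g @^-1` [set i])) -> measurable Y ->
  P Y = (\sum_(i : I) P (g @^-1` [set i] `&` Y))%E.
Proof.
move=> mg mY; rewrite (reindex _ (onW_bij _ (enum_val_bij I))) /=.
rewrite -measure_bigsetU_ord//.
- congr (P _); rewrite -bigcup_seq; apply/seteqP; split=> [x Yx|x]; last first.
    by case=> k _ [].
  by exists (enum_rank (g x)); rewrite /= ?mem_index_enum ?enum_rankK.
- by move=> k; apply: measurableI.
- by move=> i j _ _ [x [[gi _] [gj _]]]; apply: enum_val_inj; rewrite -gi -gj.
Qed.

Lemma fine_measure_fibers {R : realType} (P : probability T R)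
    {I : finType} (g : T -> I) (Y : set T) :
  (forall i, measurable (g @^-1` [set i])) -> measurable Y ->
  fine (P Y) = \sum_(i : I) fine (P (g @^-1` [set i] `&` Y)).
Proof.
move=> mg mY; rewrite (measure_fibers P g) // sum_fine // => i _.
by apply: fin_num_measure; exact: measurableI.
Qed.

Lemma measurable_fun_piecewise {d'} {U : measurableType d'} {I : finType}
    (c : T -> I) (f : I -> T -> U) :
  (forall i, measurable (c @^-1` [set i])) ->
  (forall i, measurable_fun setT (f i)) ->
  measurable_fun setT (fun x => f (c x) x).
Proof.
move=> mc mf _ Y mY; rewrite setTI.
have -> : (fun x => f (c x) x) @^-1` Y =
    \bigcup_(i in [set: I]) (c @^-1` [set i] `&` f i @^-1` Y).
  apply/seteqP; split=> [x Yx|x [i _ [/= <- //]]].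
  by exists (c x).
apply: fin_bigcup_measurable; first exact: finite_finset.
by move=> i _; apply: measurableI => //; exact: measurable_preimage.
Qed.

End finite_partitions.

Lemma setI_closed_setX T1 T2 (C1 : set (set T1)) (C2 : set (set T2)) :
  setI_closed C1 -> setI_closed C2 ->
  setI_closed [set A `*` B | A in C1 & B in C2].
Proof.
move=> C1I C2I _ _ [A C1A [B C2B <-]] [A' C1A' [B' C2B' <-]].
by rewrite -setXI; exists (A `&` A'); [exact: C1I|exists (B `&` B') => //; exact: C2I].
Qed.

Lemma measurable_prod_generated {d1 d2} {T1 : measurableType d1}
    {T2 : measurableType d2} {C1 : set (set T1)} {C2 : set (set T2)} :
  measurable = <<s C1 >> -> measurable = <<s C2 >> -> C1 setT -> C2 setT ->
  @measurable _ (T1 * T2)%type = <<s [set A `*` B | A in C1 & B in C2] >>.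
Proof.
move=> mC1 mC2 C1T C2T; apply/seteqP; split; last first.
  apply: smallest_sub; first exact: sigma_algebra_measurable.
  move=> _ [A C1A [B C2B <-]].
  by apply: measurableX; [rewrite mC1|rewrite mC2]; exact: sub_sigma_algebra.
have fstC : preimage_set_system setT fst C1 `<=` [set A `*` B | A in C1 & B in C2].
  by move=> _ [A C1A <-]; exists A => //; exists setT => //; rewrite setTI setXT.
have sndC : preimage_set_system setT snd C2 `<=` [set A `*` B | A in C1 & B in C2].
  by move=> _ [B C2B <-]; exists setT => //; exists B => //; rewrite setTI setTX.
apply: smallest_sub; first exact: smallest_sigma_algebra.
move=> _ [] [X mX <-].
- apply: (sub_sigma_algebra2 fstC); rewrite g_sigma_preimageE.
  by exists X => //; rewrite mC1 in mX.
- apply: (sub_sigma_algebra2 sndC); rewrite g_sigma_preimageE.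
  by exists X => //; rewrite mC2 in mX.
Qed.

Lemma pushforward_eq_on_pi_system {d d'} {T : measurableType d}
    {U : measurableType d'} {R : realType} {G : set (set U)}
    (P : probability T R) (Q : probability U R) {F : T -> U} :
  measurable = <<s G >> -> setI_closed G -> G setT -> measurable_fun setT F ->
  (forall A, G A -> P (F @^-1` A) = Q A) ->
  forall A, measurable A -> P (F @^-1` A) = Q A.
Proof.
move=> mG GI GT mF PQ A mA.
pose PF : probability U R := distribution P (mfun_Sub (mem_set mF)).
apply: (measure_unique G (fun=> setT) mG GI _ _ PF Q) => //.
- by rewrite bigcup_const.
- by move=> _; apply: (le_lt_trans (probability_le1 PF measurableT)); exact: ltry.
Qed.

Section cylinders.
Context {A : Type}.
Implicit Types (n : nat) (f : nat -> A).

Definition cylinder n f : set (nat -> A) :=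
  [set w | forall i, (i < n)%N -> w i = f i].

(* [set0] is included so that cylinders form a pi-system. *)
Definition cylinders : set (set (nat -> A)) :=
  [set C | C = set0 \/ exists n f, C = cylinder n f].

Definition scons (a : A) f (i : nat) : A := if i is k.+1 then f k else a.

Lemma cylinders_setT (a : A) : cylinders setT.
Proof. by right; exists 0%N, (fun=> a); apply/seteqP; split=> w. Qed.

Lemma setI_closed_cylinders : setI_closed cylinders.
Proof.
suff cylI n f n' f' : (n <= n')%N -> cylinders (cylinder n f `&` cylinder n' f').
  move=> _ _ [->|[n [f ->]]] [->|[n' [f' ->]]]; rewrite ?set0I ?setI0; try by left.
  by have [/cylI|/ltnW/cylI] := leqP n n'; rewrite // setIC.
move=> le_nn'; have [agree|disagree] := pselect (forall i, (i < n)%N -> f i = f' i).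
  right; exists n', f'; apply/seteqP; split=> [w [] //|w wf'].
  by split=> // i lt_in; rewrite wf' ?agree // (leq_trans lt_in).
left; apply/seteqP; split=> // w [/= wf wf']; apply: disagree => i lt_in.
by rewrite -wf // wf' // (leq_trans lt_in).
Qed.

Lemma head_shift_cylinder (a : A) n f :
  (fun w => w 0%N) @^-1` [set a] `&` @Defs.shift A @^-1` cylinder n f =
  cylinder n.+1 (scons a f).
Proof.
apply/seteqP; split=> [w [/= <- wf] [|i] //= lt_in|w wf]; first exact: wf.
by split=> [|i lt_in]; [exact: wf|exact: (wf i.+1)].
Qed.

Lemma sigma_cylinder n f : <<s @coord_sets A >> (cylinder n f).
Proof.
have sigmaS := smallest_sigma_algebra setT (@coord_sets A).
have [_ _ _ sigmaI] := (sigma_algebraP (fun _ _ _ _ => I)).1 sigmaS.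
elim: n => [|n IHn].
  rewrite (_ : cylinder 0 f = setT); last by apply/seteqP; split.
  by have [sigma0 sigmaD _] := sigmaS; have := sigmaD _ sigma0; rewrite setD0.
rewrite (_ : cylinder n.+1 f = cylinder n f `&` [set w | w n = f n]).
  by apply: sigmaI => //; apply: sub_sigma_algebra; exists n, (f n).
apply/seteqP; split=> [w wf|w [wf wn] i]; first by split; [move=> i /ltnW|]; apply: wf.
by rewrite ltnS leq_eqVlt => /orP[/eqP ->|/wf].
Qed.

End cylinders.
Arguments cylinders : clear implicits.

Lemma sigma_algebra_bigsetU T (G : set (set T)) (I : Type) (s : seq I)
    (P : pred I) (F : I -> set T) :
  (forall i, P i -> <<s G >> (F i)) -> <<s G >> (\big[setU/set0]_(i <- s | P i) F i).
Proof.
move=> GF; elim/big_rec: _ => [|i X Pi GX]; first exact: sigma_algebra0.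
rewrite -bigcup2E; apply: sigma_algebra_bigcup => -[|[|k]] //=.
- exact: GF.
- exact: sigma_algebra0.
Qed.

Lemma coord_set_cylinders (A : finType) n (a : A) :
  [set w | w n = a] = \big[setU/set0]_(g : {ffun 'I_n.+1 -> A} | g ord_max == a)
    cylinder n.+1 (fun i => g (inord i)).
Proof.
rewrite -bigcup_seq_cond; apply/seteqP; split=> [w wn|w [g /andP[_ /eqP <-] wg]].
  exists [ffun i : 'I_n.+1 => w i]; first by rewrite /= mem_index_enum ffunE wn eqxx.
  by move=> i lt_in; rewrite ffunE inordK.
by rewrite /= wg // -[ord_max]inord_val.
Qed.

Lemma cylinders_generate (A : finType) : <<s @coord_sets A >> = <<s cylinders A >>.
Proof.
apply/seteqP; split; apply: smallest_sub; try exact: smallest_sigma_algebra.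
- move=> _ [n [a ->]]; rewrite coord_set_cylinders.
  by apply: sigma_algebra_bigsetU => g _; apply: sub_sigma_algebra; right; do 2 eexists.
- by move=> _ [->|[n [f ->]]]; [exact: sigma_algebra0|exact: sigma_cylinder].
Qed.

Section sequence_space.
Context {A : pointedType}.
Local Notation S := (g_sigma_algebraType (@coord_sets A)).

Lemma measurable_head (a : A) : measurable ((fun w : S => w 0%N) @^-1` [set a]).
Proof. by apply: sub_sigma_algebra; exists 0%N, a. Qed.

Lemma measurable_shift : measurable_fun setT (@Defs.shift A : S -> S).
Proof.
apply: (@measurability _ _ S S setT _ (@coord_sets A)) => // _ [_ [n [a ->]] <-].
by rewrite setTI; apply: sub_sigma_algebra; exists n.+1, a.
Qed.

End sequence_space.

Section product_measures.
Context {A : Type} {R : realType} {wt : A -> R} {m : set (nat -> A) -> \bar R}.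
Hypothesis hm : is_product_measure wt m.

Lemma measure_cylinder n f : m (cylinder n f) = (\prod_(i < n) wt (f i))%:E.
Proof.
rewrite -hm; congr m; apply/seteqP; split=> [w wf i|w wf i lt_in]; first exact: wf.
exact: (wf (Ordinal lt_in)).
Qed.

Lemma measure_head_shift_cylinder (a : A) n f :
  fine (m ((fun w => w 0%N) @^-1` [set a] `&` @Defs.shift A @^-1` cylinder n f)) =
  wt a * fine (m (cylinder n f)).
Proof. by rewrite head_shift_cylinder !measure_cylinder big_ord_recl. Qed.

End product_measures.

Section cellwise.
Context {d1 d2 d3 : measure_display} {X : measurableType d1}
  {Y : measurableType d2} {Z : measurableType d3} {IX IY IZ : finType}.
Variables (cX : X -> IX) (cY : Y -> IY) (cZ : Z -> IZ).
Hypotheses (mcX : forall i, measurable (cX @^-1` [set i]))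
  (mcY : forall j, measurable (cY @^-1` [set j]))
  (mcZ : forall k, measurable (cZ @^-1` [set k])).
Variables (fX : IX -> IY -> IZ -> X -> X) (fY : IX -> IY -> IZ -> Y -> Y)
  (fZ : IX -> IY -> IZ -> Z -> Z).
Hypotheses (mfX : forall i j k, measurable_fun setT (fX i j k))
  (mfY : forall i j k, measurable_fun setT (fY i j k))
  (mfZ : forall i j k, measurable_fun setT (fZ i j k)).

Definition cellwise (x : X * Y * Z) : X * Y * Z :=
  let: (u, v, w) := x in
  let: (i, j, k) := (cX u, cY v, cZ w) in (fX i j k u, fY i j k v, fZ i j k w).

Let cell (x : X * Y * Z) : IZ * IX * IY := (cZ x.2, cX x.1.1, cY x.1.2).

Let cellE k i j :
  cell @^-1` [set (k, i, j)] =
  (cX @^-1` [set i] `*` cY @^-1` [set j]) `*` cZ @^-1` [set k].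
Proof.
by apply/seteqP; split=> [[[u v] w] [<- <- <-]|[[u v] w] [[/= <- <-] <-]].
Qed.

Let measurable_cell c : measurable (cell @^-1` [set c]).
Proof. by case: c => [[k i] j]; rewrite cellE; do 2?apply: measurableX. Qed.

Lemma measurable_cellwise : measurable_fun setT cellwise.
Proof.
pose g (c : IZ * IX * IY) (x : X * Y * Z) :=
  let: (k, i, j) := c in (fX i j k x.1.1, fY i j k x.1.2, fZ i j k x.2).
rewrite (_ : cellwise = fun x => g (cell x) x); last first.
  by apply: funext => -[[u v] w].
apply: measurable_fun_piecewise => // -[[k i] j].
apply: measurable_fun_pair; first apply: measurable_fun_pair.
- exact: measurableT_comp (mfX i j k) (measurableT_comp measurable_fst measurable_fst).
- exact: measurableT_comp (mfY i j k) (measurableT_comp measurable_snd measurable_fst).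
- exact: measurableT_comp (mfZ i j k) measurable_snd.
Qed.

Context {R : realType}.
Variables (P1 : probability X R) (P2 : probability Y R) (P3 : probability Z R).

Lemma cellwise_rectangle (A : set X) (B : set Y) (C : set Z) :
  measurable A -> measurable B -> measurable C ->
  ((P1 \x P2) \x P3)%E (cellwise @^-1` ((A `*` B) `*` C)) =
  (\sum_(k : IZ) \sum_(i : IX) \sum_(j : IY)
     fine (P1 (cX @^-1` [set i] `&` fX i j k @^-1` A)) *
     fine (P2 (cY @^-1` [set j] `&` fY i j k @^-1` B)) *
     fine (P3 (cZ @^-1` [set k] `&` fZ i j k @^-1` C)))%:E.
Proof.
move=> mA mB mC.
rewrite (measure_fibers ((P1 \x P2) \x P3)%E cell) //; last first.
  by apply: (measurable_preimage measurable_cellwise); do 2?apply: measurableX.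
rewrite !pair_bigA -sumEFin; apply: eq_bigr => -[[k i] j] _ /=.
set Ai := cX @^-1` [set i] `&` fX i j k @^-1` A.
set Bj := cY @^-1` [set j] `&` fY i j k @^-1` B.
set Ck := cZ @^-1` [set k] `&` fZ i j k @^-1` C.
have mAi : measurable Ai := measurableI _ _ (mcX i) (measurable_preimage (mfX i j k) mA).
have mBj : measurable Bj := measurableI _ _ (mcY j) (measurable_preimage (mfY i j k) mB).
have mCk : measurable Ck := measurableI _ _ (mcZ k) (measurable_preimage (mfZ i j k) mC).
rewrite (_ : _ `&` _ = (Ai `*` Bj) `*` Ck); last first.
  rewrite /Ai /Bj /Ck; apply/seteqP; split=> [[[u v] w] [/= [<- <- <-] [[]]] //|[[u v] w]].
  by move=> [[/= [ci ?] [cj ?]] [ck ?]]; subst i j k.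
rewrite (product_measure1E (P1 \x P2)%E P3 (measurableX mAi mBj) mCk).
transitivity (P1 Ai * P2 Bj * P3 Ck)%E; first by congr (_ * _)%E; exact: product_measure1E.
by rewrite !EFinM !fineK //; exact: fin_num_measure.
Qed.

End cellwise.

Section regions.
Context {R : realType} (b : R).
Implicit Types z : R * R.

(* The pieces E_0, E_1, E_2, C_01, C_12, C_02, C_012 get indices 0, ..., 6;
   index 7 collects the remaining points, none of which lies in S_beta. *)
Definition region_index z : nat :=
  (if inE0 b z then 0 else if inE1 b z then 1 else if inE2 b z then 2
  else if inC01 b z then 3 else if inC12 b z then 4 else if inC02 b z then 5
  else if inC012 b z then 6 else 7)%N.

Lemma region_index_lt z : (region_index z < 8)%N.
Proof. by rewrite /region_index; repeat case: ifP. Qed.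

Definition region z : 'I_8 := Ordinal (region_index_lt z).

Definition digit (k r : nat) : nat :=
  (match r with
   | 0 => 0 | 1 => 1 | 2 => 2
   | 3 => if k <= 3 then 0 else 1
   | 4 => if k <= 3 then 1 else 2
   | 5 => if k <= 3 then 0 else 2
   | 6 => if k %% 3 == 1 then 0 else if k %% 3 == 2 then 1 else 2
   | _ => 0
   end)%N.

Lemma tau_region k z : tau b k z = bmap b z (q R (digit k (region z))).
Proof.
rewrite /tau /a_k /region /region_index /digit /=.
case: (inE0 b z) => //; case: (inE1 b z) => //; case: (inE2 b z) => //.
case: (inC01 b z); first by case: (k <= 3)%N.
case: (inC12 b z); first by case: (k <= 3)%N.
case: (inC02 b z); first by case: (k <= 3)%N.
by case: (inC012 b z) => //; case: (k %% 3 == 1)%N; case: (k %% 3 == 2)%N.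
Qed.

Lemma region_S_beta z : S_beta b z -> region_index z != 7%N.
Proof.
case=> x_ge0 [y_ge0 sum_le]; rewrite /region_index.
rewrite /inE0 /inE1 /inE2 /inC01 /inC12 /inC02 /inC012 x_ge0 y_ge0 /=.
have [xl|xl] := ltP z.1 b^-1; have [yl|yl] := ltP z.2 b^-1 => //=;
have [sl|sl] := leP (z.1 + z.2) (c1 b) => //=;
by rewrite /c2 sum_le.
Qed.

Lemma measurable_region_index : measurable_fun setT region_index.
Proof.
have msum : measurable_fun setT (fun z : R * R => z.1 + z.2).
  exact: measurable_funD measurable_fst measurable_snd.
rewrite /region_index /inE0 /inE1 /inE2 /inC01 /inC12 /inC02 /inC012.
by repeat apply: measurable_fun_ifT => //; repeat apply: measurable_and;
  (apply: measurable_fun_ler || apply: measurable_fun_ltr) => //;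
  (exact: measurable_fst || exact: measurable_snd || exact: msum).
Qed.

Lemma measurable_S_beta : measurable (S_beta b).
Proof.
rewrite (_ : S_beta b =
    (fun z => [&& 0 <= z.1, 0 <= z.2 & z.1 + z.2 <= c2 b]) @^-1` [set true]).
  apply: measurable_preimage => //; repeat apply: measurable_and;
  apply: measurable_fun_ler => //; (exact: measurable_fst || exact: measurable_snd
    || exact: measurable_funD measurable_fst measurable_snd).
by apply/seteqP; split=> z /=; [case=> -> [-> ->]|case/and3P].
Qed.

Lemma measurable_region r : measurable (region @^-1` [set r]).
Proof.
rewrite (_ : _ @^-1` _ = region_index @^-1` [set val r]).
  exact: measurable_preimage measurable_region_index _.
by apply/seteqP; split=> z /=; [move=> <-|move=> zr; apply: val_inj].
Qed.

Lemma measurable_bmap (v : R * R) : measurable_fun setT (fun z => bmap b z v).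
Proof.
apply: measurable_fun_pair => /=; apply: measurable_funB => //.
- exact: measurable_funM measurable_fst.
- exact: measurable_funM measurable_snd.
Qed.

Lemma measurable_tau k : measurable_fun setT (tau b k).
Proof.
rewrite (funext (tau_region k)).
apply: (measurable_fun_piecewise region (fun r z => bmap b z (q R (digit k r)))).
- exact: measurable_region.
- by move=> r; exact: measurable_bmap.
Qed.

End regions.

Definition rectangles {d} (Z : measurableType d) : set (set (Omega * Upsilon * Z)) :=
  [set C `*` B | C in [set C1 `*` C2 | C1 in cylinders bool & C2 in cylinders 'I_3]
               & B in measurable].

Section rectangles.
Context {d} {Z : measurableType d}.

Let cylinder_pairs_setT :
  [set C1 `*` C2 | C1 in cylinders bool & C2 in cylinders 'I_3] setT.
Proof.
exists setT; first exact: (cylinders_setT false).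
by exists setT; [exact: (cylinders_setT ord0)|exact: setXTT].
Qed.

Lemma measurable_rectangles : measurable = <<s rectangles Z >>.
Proof.
apply: (measurable_prod_generated _ _ cylinder_pairs_setT measurableT).
- apply: (measurable_prod_generated _ _ (cylinders_setT false) (cylinders_setT ord0));
    exact: cylinders_generate.
- by rewrite sigma_algebra_id //; exact: sigma_algebra_measurable.
Qed.

Lemma setI_closed_rectangles : setI_closed (rectangles Z).
Proof.
apply: setI_closed_setX; last exact: measurableI.
by apply: setI_closed_setX; exact: setI_closed_cylinders.
Qed.

Lemma rectangles_setT : rectangles Z setT.
Proof. by exists setT => //; exists setT => //; exact: setXTT. Qed.

End rectangles.

(* The index k = 3 omega_1 + upsilon_1 + 1 of the map used by R_beta, written
   with successors so that it evaluates to a numeral on concrete symbols. *)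
Definition tau_index (bb : bool) (j : 'I_3) : nat := if bb then j.+4 else j.+1.

Lemma tau_indexE bb j : tau_index bb j = (3 * bit bb + j + 1)%N.
Proof. by case: bb; rewrite /= ?mul0n ?muln1 ?add0n addn1 // addnC addn3. Qed.

Section cellwise_maps.
Context {R : realType} (b : R).

Lemma Kmap_cellwise : Kmap b = cellwise (fun w : Omega => w 0%N)
  (fun w : Upsilon => w 0%N) (region b)
  (fun _ _ r => if (3 <= r <= 5)%N then @Defs.shift bool else id)
  (fun _ _ r => if r == 6%N :> nat then @Defs.shift 'I_3 else id)
  (fun bb j r => if r == 7%N :> nat then id
                 else fun z => bmap b z (q R (digit (tau_index bb j) r))).
Proof.
apply: funext => -[[om up] z]; rewrite /Kmap /cellwise /region /region_index /=.
case: (om 0%N); case: (up 0%N) => [[|[|[|//]]] ?]; rewrite /tau_index /digit /=;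
by repeat case: ifP.
Qed.

Lemma Rmap_cellwise : Rmap b = cellwise (fun w : Omega => w 0%N)
  (fun w : Upsilon => w 0%N) (cst (ord0 : 'I_1))
  (fun _ _ _ => @Defs.shift bool) (fun _ _ _ => @Defs.shift 'I_3)
  (fun bb j _ => tau b (tau_index bb j)).
Proof. by apply: funext => -[[om up] z]; rewrite /cellwise /= tau_indexE. Qed.

Lemma measurable_Kmap : measurable_fun setT (Kmap b).
Proof.
rewrite Kmap_cellwise; apply: measurable_cellwise.
- exact: (@measurable_head bool).
- exact: (@measurable_head 'I_3).
- exact: measurable_region.
- by move=> _ _ r; case: ifP => _ //; exact: measurable_shift.
- by move=> _ _ r; case: ifP => _ //; exact: measurable_shift.
- by move=> bb j r; case: ifP => _ //; exact: measurable_bmap.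
Qed.

Lemma measurable_Rmap : measurable_fun setT (Rmap b).
Proof.
rewrite Rmap_cellwise; apply: measurable_cellwise.
- exact: (@measurable_head bool).
- exact: (@measurable_head 'I_3).
- by move=> k; rewrite preimage_cst; case: ifP.
- by move=> *; exact: measurable_shift.
- by move=> *; exact: measurable_shift.
- by move=> *; exact: measurable_tau.
Qed.

End cellwise_maps.

Section weights.
Context {R : realType} (p s t : R).

Lemma sum_wt_tau_index (F : nat -> R) :
  \sum_(bb : bool) \sum_(j : 'I_3) wt1 p bb * wt2 s t j * F (tau_index bb j) =
  p * s * F 1%N + p * t * F 2%N + p * (1 - s - t) * F 3%N
  + (1 - p) * s * F 4%N + (1 - p) * t * F 5%N + (1 - p) * (1 - s - t) * F 6%N.
Proof. by rewrite big_bool !big_ord_recr !big_ord0 /= /wt1 /wt2 /=; ring. Qed.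

(* On E_i nothing is shifted and the digit is fixed, on C_ij the sequence omega
   is shifted and the digit depends on omega_1 only, on C_012 the sequence
   upsilon is shifted and the digit is upsilon_1. *)
Lemma Kmap_cell_weights (r : 'I_8) (x : bool -> R) (y : 'I_3 -> R) (F : nat -> R) :
  \sum_(bb : bool) \sum_(j : 'I_3)
    (if (3 <= r <= 5)%N then wt1 p bb * \sum_(a : bool) x a else x bb) *
    (if r == 6%N :> nat then wt2 s t j * \sum_(i : 'I_3) y i else y j) *
    F (digit (tau_index bb j) r) =
  (\sum_(a : bool) x a) * (\sum_(i : 'I_3) y i) *
  \sum_(bb : bool) \sum_(j : 'I_3) wt1 p bb * wt2 s t j * F (digit (tau_index bb j) r).
Proof.
case: r => [[|[|[|[|[|[|[|[|//]]]]]]]] ?];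
  by rewrite !big_bool !big_ord_recr !big_ord0 /= /wt1 /wt2 /=; ring.
Qed.

End weights.



Section rectangle_measures.
Context {R : realType} {b p s t : R}.
Context {m1 : probability Omega R} {m2 : probability Upsilon R}.
Context {mu nu : probability (R * R)%type R}.
Context {n1 : nat} {f1 : nat -> bool} {n2 : nat} {f2 : nat -> 'I_3}.
Context {B : set (R * R)}.
Hypotheses (hm1 : is_product_measure (wt1 p) m1)
  (hm2 : is_product_measure (wt2 s t) m2) (hmu : mu (~` S_beta b) = 0%E).
Hypothesis mB : measurable B.
Hypothesis hnuB : nu B = ((p * s)%:E * mu (tau b 1 @^-1` B)
           + (p * t)%:E * mu (tau b 2 @^-1` B)
           + (p * (1 - s - t))%:E * mu (tau b 3 @^-1` B)
           + ((1 - p) * s)%:E * mu (tau b 4 @^-1` B)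
           + ((1 - p) * t)%:E * mu (tau b 5 @^-1` B)
           + ((1 - p) * (1 - s - t))%:E * mu (tau b 6 @^-1` B))%E.

Let C1 : set Omega := cylinder n1 f1.
Let C2 : set Upsilon := cylinder n2 f2.

Let mC1 : measurable C1. Proof. exact: sigma_cylinder. Qed.
Let mC2 : measurable C2. Proof. exact: sigma_cylinder. Qed.

Lemma nu_rectangle : ((m1 \x m2) \x nu)%E ((C1 `*` C2) `*` B) =
  (fine (m1 C1) * fine (m2 C2) * \sum_(bb : bool) \sum_(j : 'I_3)
     wt1 p bb * wt2 s t j * fine (mu (tau b (tau_index bb j) @^-1` B)))%:E.
Proof.
have fin d (T : measurableType d) (P : probability T R) A :
    measurable A -> P A = (fine (P A))%:E.
  by move=> mA; rewrite fineK //; exact: fin_num_measure.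
rewrite (product_measure1E (m1 \x m2)%E nu (measurableX mC1 mC2) mB).
transitivity (m1 C1 * m2 C2 * nu B)%E; first by congr (_ * _)%E; exact: product_measure1E.
pose T k := fine (mu (tau b k @^-1` B)).
have mu_tau k : mu (tau b k @^-1` B) = (T k)%:E.
  exact: fin _ _ mu _ (measurable_preimage (measurable_tau b k) mB).
rewrite hnuB (fin _ _ m1 C1) // (fin _ _ m2 C2) // (sum_wt_tau_index p s t T).
by rewrite !mu_tau -!EFinM.
Qed.

Lemma Rmap_rectangle : ((m1 \x m2) \x mu)%E (Rmap b @^-1` ((C1 `*` C2) `*` B)) =
  ((m1 \x m2) \x nu)%E ((C1 `*` C2) `*` B).
Proof.
rewrite nu_rectangle Rmap_cellwise cellwise_rectangle //; first last.
- by move=> *; exact: measurable_tau.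
- by move=> *; exact: measurable_shift.
- by move=> *; exact: measurable_shift.
- by move=> k; rewrite preimage_cst; case: ifP.
- exact: (@measurable_head 'I_3).
- exact: (@measurable_head bool).
congr EFin; rewrite big_ord1 preimage_cst mem_set //= mulr_sumr.
apply: eq_bigr => bb _; rewrite mulr_sumr; apply: eq_bigr => j _.
rewrite setTI !(measure_head_shift_cylinder hm1) !(measure_head_shift_cylinder hm2).
by rewrite /C1 /C2; ring.
Qed.

Lemma fine_mu_outside (r : 'I_8) A : r == 7%N :> nat -> measurable A ->
  fine (mu (region b @^-1` [set r] `&` A)) = 0.
Proof.
move=> /eqP r7 mA; rewrite (subset_measure0 _ (measurableC (measurable_S_beta b)) _ hmu) //.
  by apply: measurableI => //; exact: measurable_region.
by move=> z [/= zr _] Sz; move: (region_S_beta b z Sz); rewrite -r7 -zr /= eqxx.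
Qed.

Let piece_mass (r : 'I_8) (e : nat) : R := if r == 7%N :> nat then 0
  else fine (mu (region b @^-1` [set r] `&` (fun z => bmap b z (q R e)) @^-1` B)).

Lemma fine_mu_tau k :
  fine (mu (tau b k @^-1` B)) = \sum_(r : 'I_8) piece_mass r (digit k r).
Proof.
rewrite (fine_measure_fibers mu (region b)) //; last first.
  exact: measurable_preimage (measurable_tau b k) mB.
  exact: measurable_region.
apply: eq_bigr => r _; rewrite /piece_mass; case: ifP => [r7|_].
  by apply: fine_mu_outside => //; exact: measurable_preimage (measurable_tau b k) mB.
congr (fine (mu _)); apply/seteqP; split=> z [/= zr]; by rewrite tau_region zr.
Qed.

Lemma Kmap_rectangle : ((m1 \x m2) \x mu)%E (Kmap b @^-1` ((C1 `*` C2) `*` B)) =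
  ((m1 \x m2) \x nu)%E ((C1 `*` C2) `*` B).
Proof.
rewrite nu_rectangle Kmap_cellwise cellwise_rectangle //; first last.
- move=> bb j r; case: ifP => _ //; exact: measurable_bmap.
- by move=> _ _ r; case: ifP => _ //; exact: measurable_shift.
- by move=> _ _ r; case: ifP => _ //; exact: measurable_shift.
- exact: measurable_region.
- exact: (@measurable_head 'I_3).
- exact: (@measurable_head bool).
have fine_C1 := fine_measure_fibers m1 (fun w => w 0%N) C1 (@measurable_head bool) mC1.
have fine_C2 := fine_measure_fibers m2 (fun w => w 0%N) C2 (@measurable_head 'I_3) mC2.
congr EFin; transitivity (\sum_(r : 'I_8) fine (m1 C1) * fine (m2 C2) *
    \sum_(bb : bool) \sum_(j : 'I_3)
      wt1 p bb * wt2 s t j * piece_mass r (digit (tau_index bb j) r)).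
  apply: eq_bigr => r _; rewrite fine_C1 fine_C2 -Kmap_cell_weights.
  apply: eq_bigr => bb _; apply: eq_bigr => j _; congr (_ * _ * _).
  - case: ifP => _; last by rewrite preimage_id.
    by rewrite (measure_head_shift_cylinder hm1) fine_C1.
  - case: ifP => _; last by rewrite preimage_id.
    by rewrite (measure_head_shift_cylinder hm2) fine_C2.
  - by rewrite /piece_mass; case: ifP => // r7; apply: fine_mu_outside.
rewrite -mulr_sumr exchange_big; congr (_ * _); apply: eq_bigr => bb _.
by rewrite exchange_big; apply: eq_bigr => j _; rewrite -mulr_sumr fine_mu_tau.
Qed.

End rectangle_measures.

Theorem lemma5p6 (R : realType) (beta p s t : R)
  (hb1 : 1 < beta) (hb2 : beta < 3 / 2)
  (hp0 : 0 < p) (hp1 : p < 1) (hs : 0 < s) (ht : 0 < t) (hst : s + t < 1)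
  (m1 : probability Omega R) (m2 : probability Upsilon R)
  (hm1 : is_product_measure (wt1 p) m1)
  (hm2 : is_product_measure (wt2 s t) m2)
  (mu : probability (R * R)%type R)
  (hmu : mu (~` S_beta beta) = 0%E)
  (nu : probability (R * R)%type R)
  (hnu : forall B : set (R * R), measurable B ->
     nu B = ((p * s)%:E * mu (tau beta 1 @^-1` B)
           + (p * t)%:E * mu (tau beta 2 @^-1` B)
           + (p * (1 - s - t))%:E * mu (tau beta 3 @^-1` B)
           + ((1 - p) * s)%:E * mu (tau beta 4 @^-1` B)
           + ((1 - p) * t)%:E * mu (tau beta 5 @^-1` B)
           + ((1 - p) * (1 - s - t))%:E * mu (tau beta 6 @^-1` B))%E) :
  (forall A : set (Omega * Upsilon * (R * R)), measurable A ->
     ((m1 \x m2) \x mu)%E (Kmap beta @^-1` A) = ((m1 \x m2) \x nu)%E A) /\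
  (forall A : set (Omega * Upsilon * (R * R)), measurable A ->
     ((m1 \x m2) \x mu)%E (Rmap beta @^-1` A) = ((m1 \x m2) \x nu)%E A).
Proof.
have on_rectangles (F : Omega * Upsilon * (R * R) -> Omega * Upsilon * (R * R)) :
    measurable_fun setT F ->
    (forall n1 (f1 : nat -> bool) n2 (f2 : nat -> 'I_3) (B : set (R * R)), measurable B ->
      let C := ((cylinder n1 f1 : set Omega) `*` (cylinder n2 f2 : set Upsilon)) `*` B in
      ((m1 \x m2) \x mu)%E (F @^-1` C) = ((m1 \x m2) \x nu)%E C) ->
    forall A, measurable A -> ((m1 \x m2) \x mu)%E (F @^-1` A) = ((m1 \x m2) \x nu)%E A.
  move=> mF Frect; apply: (pushforward_eq_on_pi_system ((m1 \x m2) \x mu)%E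
    ((m1 \x m2) \x nu)%E measurable_rectangles setI_closed_rectangles rectangles_setT mF).
  move=> _ [_ [C1 [->|[n1 [f1 ->]]] [C2 [->|[n2 [f2 ->]]] <-]] [B mB <-]];
    rewrite ?set0X ?setX0 ?set0X ?preimage_set0 ?measure0 //.
  exact: Frect.
split; apply: on_rectangles.
- exact: measurable_Kmap.
- by move=> n1 f1 n2 f2 B mB; exact: Kmap_rectangle hm1 hm2 hmu mB (hnu B mB).
- exact: measurable_Rmap.
- by move=> n1 f1 n2 f2 B mB; exact: Rmap_rectangle hm1 hm2 mB (hnu B mB).
Qed.
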